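(* For any integer $g\ge 0$, \[\sum_{S\in\mathcal{B}(g)}e_2(S)\le 2F_{g+1},\] where $F_n$ denotes the $n$-th Fibonacci number ($F_1=F_2=1$, $F_{n+2}=F_{n+1}+F_n$).
   Context: A numerical semigroup $S$ is a submonoid of $\mathbb{N}_0$ with finite complement; its genus is the size of the complement, $m(S)$ is its smallest nonzero element, $F(S)$ is the largest element of the complement (Frobenius number), and $e(S)$ is the size of its minimal generating set $(S\setminus\{0\})\setminus((S\setminus\{0\})+(S\setminus\{0\}))$. Define $e_1(S)=\#([m(S),2m(S)-1]\cap S)$ and $e_2(S)=e(S)-e_1(S)$. $\mathcal{B}(g)$ is the set of numerical semigroups $S$ of genus $g$ with $F(S)<2m(S)$. *)

From mathcomp Require Import all_boot.
Set Implicit Arguments. Unset Strict Implicit. Unset Printing Implicit Defensive.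

(* A numerical semigroup S is represented by its set of gaps N_0 \ S,
   given as a strictly increasing (hence canonical) finite list G. *)

Definition inS (G : seq nat) (x : nat) : bool := x \notin G.

(* S = N_0 \ G is a submonoid of N_0 (finite complement is automatic). *)
Definition is_numsg (G : seq nat) : Prop :=
  sorted ltn G /\ inS G 0 /\
  (forall x y, inS G x -> inS G y -> inS G (x + y)).

Definition genus (G : seq nat) : nat := size G.

(* Frobenius number: largest gap (only used when G is nonempty). *)
Definition frob (G : seq nat) : nat := \max_(x <- G) x.

(* multiplicity m(S): the smallest nonzero element of S.  The search range
   1 .. frob G + 1 always contains an element of S (namely frob G + 1). *)
Definition mult (G : seq nat) : nat :=
  head 0 [seq x <- iota 1 (frob G).+1 | inS G x].

Definition min_gen (G : seq nat) (x : nat) : bool :=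
  [&& 0 < x, inS G x &
      ~~ has (fun a => inS G a && inS G (x - a)) (iota 1 x.-1)].

(* All minimal
   generators are <= frob G + mult G (any larger x equals m + (x - m) with
   x - m > F in S), so counting over 1 .. frob G + 2 mult G is exhaustive. *)
Definition edim (G : seq nat) : nat :=
  count (min_gen G) (iota 1 (frob G + 2 * mult G)).

Definition e1 (G : seq nat) : nat :=
  count (inS G) (iota (mult G) (mult G)).

Definition e2 (G : seq nat) : nat := edim G - e1 G.

(* S in B(g): numerical semigroup of genus g with F(S) < 2 m(S),
   i.e. every gap is < 2 m(S) (vacuous for S = N_0, where F = -1). *)
Definition inB (g : nat) (G : seq nat) : Prop :=
  is_numsg G /\ genus G = g /\ all (fun x => x < 2 * mult G) G.

Fixpoint fib (n : nat) : nat :=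
  match n with
  | 0 => 0
  | 1 => 1
  | (k.+1 as n').+1 => fib n' + fib k
  end.

From mathcomp Require Import all_boot zify.
Set Implicit Arguments. Unset Strict Implicit. Unset Printing Implicit Defensive.

(* A semigroup S in B(g) with multiplicity m is determined by its window, the
   word of m bits telling which of m, ..., 2m-1 lie in S; counting a bit in S
   as 1 and a gap as 2, the window has weight g+1.  Every minimal generator
   not counted by e1 lies in (2m, 3m); such an x = 2m+k+1 makes m+k+1 a gap
   and forbids m+1+i and m+1+j to be both in S when i+j = k-1.  Hence the
   pairs (S, x) inject into pairs (q, s) of words with q "mirror-free" and
   weight q + weight s = g-2.  Mirror-free words of weight n are counted by
   K n with K (n+4) = 2 K (n+1) + K n, which grows more slowly than the
   Fibonacci numbers, and the convolution of K with F is at most 2 F_(g+1). *)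

Definition weight (w : seq bool) : nat := size w + count negb w.

Lemma weight_cons b w : weight (b :: w) = (if b then 1 else 2) + weight w.
Proof. by rewrite /weight /=; case: b => /=; lia. Qed.

Lemma weight_cat v w : weight (v ++ w) = weight v + weight w.
Proof. by rewrite /weight size_cat count_cat addnACA. Qed.

Lemma weight_rcons w b : weight (rcons w b) = weight w + (if b then 1 else 2).
Proof. by rewrite -cats1 weight_cat weight_cons addn0. Qed.

Fixpoint words (n : nat) : seq (seq bool) :=
  match n with
  | 0 => [:: [::]]
  | 1 => [:: [:: true]]
  | (k.+1 as n').+1 => map (cons true) (words n') ++ map (cons false) (words k)
  end.

Lemma words_SS n :
  words n.+2 = map (cons true) (words n.+1) ++ map (cons false) (words n).
Proof. by []. Qed.

Lemma words_weight w : w \in words (weight w).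
Proof.
elim: w => [|[] w IH] //; rewrite weight_cons.
  rewrite add1n; case: (weight w) IH => [|k] IH.
    by move: IH; rewrite mem_seq1 => /eqP ->.
  by rewrite words_SS mem_cat map_f.
by rewrite add2n words_SS mem_cat orbC map_f.
Qed.

Lemma size_words n : size (words n) = fib n.+1.
Proof.
elim/ltn_ind: n => [[|[|n]]] // IH.
by rewrite words_SS size_cat !size_map !IH.
Qed.

Definition mirror_free (q : seq bool) : Prop :=
  forall i j, i + j = (size q).-1 -> ~~ (nth false q i && nth false q j).

Lemma mirror_free1 a : mirror_free [:: a] -> a = false.
Proof. by move/(_ 0 0 erefl); case: a. Qed.

Lemma mirror_free_cons_rcons a q b :
  mirror_free (a :: rcons q b) -> ~~ (a && b) /\ mirror_free q.
Proof.
move=> mf; split.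
  by have := mf 0 (size q).+1; rewrite /= size_rcons nth_rcons ltnn eqxx; apply.
move=> i j ij; have [q0 | q_gt0] := posnP (size q).
  by rewrite !nth_default ?q0.
have [i_lt j_lt] : i < size q /\ j < size q by lia.
by have := mf i.+1 j.+1; rewrite /= size_rcons !nth_rcons i_lt j_lt; apply; lia.
Qed.

Fixpoint mirror_free_words (n : nat) : seq (seq bool) :=
  match n with
  | 0 => [:: [::]]
  | 1 => [::]
  | 2 => [:: [:: false]]
  | k.+3 => [seq true :: rcons q false | q <- mirror_free_words k] ++
            [seq false :: rcons q true | q <- mirror_free_words k] ++
            (if k is l.+1 then [seq false :: rcons q false | q <- mirror_free_words l]
             else [::])
  end.

Lemma mirror_free_words_weight q : mirror_free q -> q \in mirror_free_words (weight q).
Proof.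
have [n] := ubnP (size q); elim: n q => // n IH [|a q] //.
case/lastP: q => [_ /mirror_free1 -> // | q b q_lt].
case/mirror_free_cons_rcons=> ab mfq.
have {q_lt} IHq : q \in mirror_free_words (weight q).
  by apply: IH mfq; move: q_lt; rewrite /= size_rcons; lia.
rewrite weight_cons weight_rcons.
case: a b ab => [] [] // _; rewrite !addnS addn0 /= ?add0n !mem_cat.
- by rewrite map_f.
- by rewrite orbC map_f.
- by rewrite orbA orbC map_f.
Qed.

Definition nmirror (n : nat) : nat := size (mirror_free_words n).

Lemma nmirror_rec n : nmirror n.+4 = 2 * nmirror n.+1 + nmirror n.
Proof. by rewrite /nmirror /= !size_cat !size_map; lia. Qed.

Lemma nmirror_le_succ n : 7 <= n -> nmirror n <= nmirror n.+1.
Proof.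
elim/ltn_ind: n => n IH n_ge7.
have [n_lt11 | n_ge11] := ltnP n 11.
  have : n \in [:: 7; 8; 9; 10] by rewrite !inE; lia.
  by rewrite !inE => /or4P [] /eqP ->.
have [k n_eq] : exists k, n = k.+4 by exists (n - 4); lia.
have := IH k _ _; have := IH k.+1 _ _; rewrite n_eq !nmirror_rec; lia.
Qed.

Definition mirror_fib_conv (n : nat) : nat := \sum_(0 <= j < n) nmirror j * fib (n - j).

Lemma mirror_fib_conv_rec n :
  mirror_fib_conv n.+2 = mirror_fib_conv n.+1 + mirror_fib_conv n + nmirror n.+1.
Proof.
rewrite /mirror_fib_conv !big_nat_recr //= subSS !subSn // subnn /=.
have -> : \sum_(0 <= j < n) nmirror j * fib (n.+2 - j) =
          \sum_(0 <= j < n) nmirror j * fib (n.+1 - j) +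
          \sum_(0 <= j < n) nmirror j * fib (n - j).
  rewrite -big_split; apply: eq_big_nat => j /andP [_ j_lt] /=.
  by rewrite !subSn -?mulnDr //; lia.
lia.
Qed.

Lemma mirror_fib_conv_le n : mirror_fib_conv n <= 2 * fib n.+2.
Proof.
(* With this extra term the inductive step reduces to nmirror k.+1 <= nmirror k.+2. *)
suff: mirror_fib_conv n + (nmirror n + nmirror n.+1 + nmirror n.+2) <= 2 * fib n.+2 by lia.
elim/ltn_ind: n => n IH.
have [n_lt8 | n_ge8] := ltnP n 8.
  by move: n n_lt8 {IH} => [|[|[|[|[|[|[|[|n]]]]]]]] //; rewrite /mirror_fib_conv unlock.
have [k n_eq] : exists k, n = k.+2 by exists (n - 2); lia.
have := IH k _; have := IH k.+1 _; have := nmirror_le_succ (_ : 7 <= k.+1).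
rewrite n_eq mirror_fib_conv_rec !nmirror_rec (_ : fib k.+4 = fib k.+3 + fib k.+2) //.
lia.
Qed.

Definition split_words (g : nat) : seq (seq bool * seq bool) :=
  flatten [seq [seq (q, s) | q <- mirror_free_words j, s <- words (g.-2 - j)]
          | j <- iota 0 g.-1].

Lemma size_split_words g : size (split_words g) = mirror_fib_conv g.-1.
Proof.
rewrite size_flatten /shape -map_comp sumnE big_map /mirror_fib_conv /index_iota subn0.
apply: eq_big_seq => j; rewrite mem_iota => j_lt /=.
by rewrite size_allpairs size_words /nmirror; congr (_ * fib _); lia.
Qed.

Lemma mem_split_words g q s :
  mirror_free q -> weight (true :: q ++ false :: s) = g.+1 -> (q, s) \in split_words g.
Proof.
rewrite weight_cons weight_cat weight_cons => mfq w_eq; apply/flattenP.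
exists [seq (q', s') | q' <- mirror_free_words (weight q), s' <- words (g.-2 - weight q)].
  by apply: map_f; rewrite mem_iota; lia.
apply/allpairsP; exists (q, s); split=> //; first exact: mirror_free_words_weight.
by rewrite (_ : g.-2 - weight q = weight s); [exact: words_weight | lia].
Qed.

Lemma head_filter (T : Type) (x0 : T) (p : pred T) (s : seq T) :
  head x0 (filter p s) = nth x0 s (find p s).
Proof. by elim: s => //= y s IH; case: (p y). Qed.

Lemma frob_ge G x : x \in G -> x <= frob G.
Proof. by move=> xG; rewrite /frob; apply: (@leq_bigmax_seq _ _ predT (fun y => y) x xG). Qed.

Lemma multP G :
  [/\ 0 < mult G, inS G (mult G) & forall x, 0 < x < mult G -> x \in G].
Proof.
have hasS : has (inS G) (iota 1 (frob G).+1).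
  apply/hasP; exists (frob G).+1; first by rewrite mem_iota; lia.
  by apply/negP => /frob_ge; rewrite ltnn.
have find_lt : find (inS G) (iota 1 (frob G).+1) < (frob G).+1.
  by move: hasS; rewrite has_find size_iota.
have multE : mult G = 1 + find (inS G) (iota 1 (frob G).+1).
  by rewrite /mult head_filter nth_iota.
split; first by rewrite multE.
  by rewrite multE -(nth_iota 0 1 find_lt) nth_find.
move=> x /andP [x_gt0 x_lt].
have x_lt_find : x.-1 < find (inS G) (iota 1 (frob G).+1) by lia.
have := before_find 0 x_lt_find.
rewrite nth_iota ?add1n ?prednK // => [/negbFE //|]; lia.
Qed.

Lemma min_gen_indecomposable G x a :
  min_gen G x -> 0 < a < x -> inS G a -> inS G (x - a) -> False.
Proof.
case/and3P=> x_gt0 _ /hasPn no_split a_range Sa Sxa.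
have a_in : a \in iota 1 x.-1 by rewrite mem_iota; lia.
by have := no_split a a_in; rewrite Sa Sxa.
Qed.

Lemma inS_ge_mult G x : 0 < x -> inS G x -> mult G <= x.
Proof.
move=> x_gt0 Sx; rewrite leqNgt; apply/negP => x_lt.
have [_ _ small_gaps] := multP G.
by move: Sx; rewrite /inS small_gaps ?x_gt0.
Qed.

Lemma min_gen_ge_mult G x : min_gen G x -> mult G <= x.
Proof. by case/and3P=> x_gt0 Sx _; apply: inS_ge_mult. Qed.

Lemma min_gen_low G x : mult G <= x < 2 * mult G -> min_gen G x = inS G x.
Proof.
move=> x_range; have [m_gt0 _ _] := multP G.
apply/idP/idP => [/and3P [] // | Sx]; apply/and3P; split => //; first by lia.
apply/hasPn => a; rewrite mem_iota => a_range; apply/negP => /andP [Sa Sxa].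
have a_ge : mult G <= a by apply: inS_ge_mult Sa; lia.
have xa_ge : mult G <= x - a by apply: inS_ge_mult Sxa; lia.
lia.
Qed.

Lemma count_le_uniq (T : eqType) (p : pred T) (s t : seq T) :
  uniq s -> {in s, forall x, p x -> x \in t} -> count p s <= count p t.
Proof.
move=> s_uniq sub; rewrite -!size_filter; apply: uniq_leq_size; first exact: filter_uniq.
by move=> x; rewrite !mem_filter => /andP [px xs]; rewrite px sub.
Qed.

Definition window G : seq bool := [seq inS G z | z <- iota (mult G) (mult G)].

Lemma size_window G : size (window G) = mult G.
Proof. by rewrite size_map size_iota. Qed.

Lemma nth_window G i : i < mult G -> nth false (window G) i = inS G (mult G + i).
Proof. by move=> i_lt; rewrite (nth_map 0) ?size_iota // nth_iota. Qed.

(* For x = 2m + k + 1, the words q and s record m+1, ..., m+k and m+k+2, ..., 2m-1. *)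
Definition gen_split G x : seq bool * seq bool :=
  let w := behead (window G) in let k := (x - 2 * mult G).-1 in (take k w, drop k.+1 w).

Section SemigroupInB.

Variables (g : nat) (G : seq nat).
Hypothesis G_B : inB g G.

Lemma sorted_gaps : sorted ltn G.
Proof. by case: G_B => [[]]. Qed.

Lemma zero_notin_gaps : 0 \notin G.
Proof. by case: G_B => [[_ []]]. Qed.

Lemma gaps_lt_2mult x : x \in G -> x < 2 * mult G.
Proof. by case: G_B => _ [_ /allP]; apply. Qed.

Lemma inS_ge_2mult z : 2 * mult G <= z -> inS G z.
Proof. by move=> z_ge; apply/negP => /gaps_lt_2mult; lia. Qed.

Lemma mem_gaps_window z :
  (z \in G) = (0 < z < mult G) ||
              ((mult G <= z < 2 * mult G) && ~~ nth false (window G) (z - mult G)).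
Proof.
have [m_gt0 _ small_gaps] := multP G.
have [-> | z_gt0] := posnP z; first by rewrite (negbTE zero_notin_gaps) /=; lia.
have [z_lt | z_ge] := ltnP z (mult G); first by rewrite small_gaps ?z_gt0.
have [z_lt2 | z_ge2] := ltnP z (2 * mult G); last first.
  by apply/negbTE/negP => /gaps_lt_2mult; lia.
by rewrite /= nth_window ?subnKC // /inS ?negbK //; lia.
Qed.

Lemma weight_window : weight (window G) = g.+1.
Proof.
have [m_gt0 _ small_gaps] := multP G.
have G_uniq : uniq G := sorted_uniq ltn_trans ltnn sorted_gaps.
have sizeG : size G = count (mem G) (iota 0 (1 + (mult G).-1 + mult G)).
  rewrite -size_filter; apply/perm_size/uniq_perm => // [|x].
    by apply/filter_uniq/iota_uniq.
  rewrite mem_filter mem_iota /=; case xG: (x \in G) => //=.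
  by have := gaps_lt_2mult xG; lia.
have -> : g = size G by case: G_B => _ [].
rewrite sizeG !iotaD !count_cat /= (negbTE zero_notin_gaps) add1n.
rewrite (@eq_in_count _ _ predT (iota 1 _)) => [|x]; last first.
  by rewrite mem_iota => x_range; apply: small_gaps; lia.
rewrite count_predT size_iota /weight size_window count_map !add0n.
rewrite (@eq_count _ _ (mem G)) => [|x] /=; last by rewrite /inS negbK.
by rewrite -addSn prednK.
Qed.

Lemma min_gen_lt_3mult x : min_gen G x -> x < 3 * mult G.
Proof.
move=> mg; have [m_gt0 Sm _] := multP G; rewrite ltnNge; apply/negP => x_ge.
by apply: (min_gen_indecomposable mg _ Sm (inS_ge_2mult _)); lia.
Qed.

Lemma e2_le_count_high : e2 G <= count (min_gen G) (iota (2 * mult G) (mult G)).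
Proof.
have edim_le : edim G <= count (min_gen G) (iota 0 (mult G + mult G + mult G)).
  rewrite /edim; apply: count_le_uniq; first exact: iota_uniq.
  by move=> x _ mg; rewrite mem_iota /=; have := min_gen_lt_3mult mg; lia.
have low0 : count (min_gen G) (iota 0 (mult G)) = 0.
  rewrite (@eq_in_count _ _ pred0) ?count_pred0 // => x; rewrite mem_iota => x_lt.
  by apply/negbTE/negP => /min_gen_ge_mult; lia.
have mid : count (min_gen G) (iota (mult G) (mult G)) = e1 G.
  by apply: eq_in_count => x; rewrite mem_iota => x_range; apply: min_gen_low; lia.
move: edim_le; rewrite !iotaD !count_cat !add0n low0 mid addnn -mul2n /e2; lia.
Qed.

Lemma window_gen_split x q s :
  min_gen G x -> 2 * mult G <= x -> gen_split G x = (q, s) ->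
  [/\ window G = true :: q ++ false :: s, x = 2 * mult G + (size q).+1 & mirror_free q].
Proof.
move=> mg x_ge [<- <-]; have [m_gt0 Sm _] := multP G.
have x_lt := min_gen_lt_3mult mg.
set k := (x - 2 * mult G).-1; set w := behead (window G).
have x_eq : x = 2 * mult G + k.+1.
  suff : x != mult G + mult G by rewrite /k; lia.
  apply/negP => /eqP x_eq; apply: (min_gen_indecomposable mg _ Sm); first lia.
  by rewrite x_eq addnK.
have nth_w i : i < (mult G).-1 -> nth false w i = inS G (mult G + i.+1).
  by move=> i_lt; rewrite /w nth_behead nth_window //; lia.
have size_w : size w = (mult G).-1 by rewrite size_behead size_window.
have size_q : size (take k w) = k by rewrite size_take size_w; case: ltnP; lia.
split; last 2 first.
- by rewrite size_q.
- move=> i j; rewrite size_q => ij.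
  have [k0 | k_gt0] := posnP k; first by rewrite !nth_default ?size_q ?k0.
  rewrite !nth_take ?nth_w; try lia; apply/negP => /andP [Si Sj].
  apply: (min_gen_indecomposable mg _ Si); first lia.
  by rewrite (_ : x - _ = mult G + j.+1) //; lia.
have w_cons : window G = true :: w.
  move: (size_window G) (nth_window m_gt0); rewrite addn0 Sm /w.
  by case: (window G) => [|b w'] /=; [lia | move=> _ ->].
have wk_gap : nth false w k = false.
  rewrite nth_w; last lia.
  apply/negbTE/negP => Sgap; apply: (min_gen_indecomposable mg _ Sm); first lia.
  by rewrite (_ : x - _ = mult G + k.+1) //; lia.
by rewrite w_cons -[in LHS](cat_take_drop k w) (drop_nth false) ?size_w ?wk_gap //; lia.
Qed.

End SemigroupInB.

Lemma window_inj g g' G G' : inB g G -> inB g' G' -> window G = window G' -> G = G'.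
Proof.
move=> G_B G'_B eq_w.
have eq_m : mult G = mult G' by rewrite -size_window eq_w size_window.
apply: (irr_sorted_eq ltn_trans ltnn (sorted_gaps G_B) (sorted_gaps G'_B)) => z.
by rewrite (mem_gaps_window G_B) (mem_gaps_window G'_B) eq_w eq_m.
Qed.

Definition high_gens G : seq nat := [seq x <- iota (2 * mult G) (mult G) | min_gen G x].

Definition gen_pairs (L : seq (seq nat)) : seq (seq nat * nat) :=
  [seq (G, x) | G <- L, x <- high_gens G].

Lemma mem_gen_pairs L G x :
  (G, x) \in gen_pairs L -> [/\ G \in L, min_gen G x & 2 * mult G <= x].
Proof.
case/allpairsPdep=> G' [x' [G'L]]; rewrite mem_filter mem_iota => /andP [mg /andP [x_ge _]].
by case=> -> ->.
Qed.

Lemma uniq_gen_pairs L : uniq L -> uniq (gen_pairs L).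
Proof.
move=> L_uniq; apply: allpairs_uniq_dep => // [G _|[G x] [G' x'] _ _ /= [-> ->] //].
exact/filter_uniq/iota_uniq.
Qed.

Lemma sum_e2_le_size_gen_pairs g L :
  {in L, forall G, inB g G} -> \sum_(G <- L) e2 G <= size (gen_pairs L).
Proof.
move=> L_B; rewrite size_allpairs_dep sumnE big_map big_seq [leqRHS]big_seq.
by apply: leq_sum => G GL; rewrite size_filter (e2_le_count_high (L_B G GL)).
Qed.

Lemma size_gen_pairs_le g L :
  uniq L -> {in L, forall G, inB g G} -> size (gen_pairs L) <= size (split_words g).
Proof.
move=> L_uniq L_B; pose split (p : seq nat * nat) := gen_split p.1 p.2.
have split_inj : {in gen_pairs L &, injective split}.
  move=> [G x] [G' x'] /mem_gen_pairs [GL mg x_ge] /mem_gen_pairs [G'L mg' x'_ge].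
  rewrite /split /=; case E: (gen_split G x) => [q s] E'.
  have [wG xE _] := window_gen_split (L_B _ GL) mg x_ge E.
  have [wG' x'E _] := window_gen_split (L_B _ G'L) mg' x'_ge (esym E').
  have eqG := window_inj (L_B _ GL) (L_B _ G'L) (etrans wG (esym wG')).
  by rewrite xE x'E eqG.
rewrite -(size_map split); apply: uniq_leq_size.
  by rewrite map_inj_in_uniq // uniq_gen_pairs.
move=> _ /mapP [[G x] p_in ->]; have [GL mg x_ge] := mem_gen_pairs p_in.
rewrite /split /=; case E: (gen_split G x) => [q s].
have [wG _ mfq] := window_gen_split (L_B _ GL) mg x_ge E.
by apply: mem_split_words; rewrite // -wG (weight_window (L_B _ GL)).
Qed.

Theorem proposition4p1 (g : nat) (L : seq (seq nat)) :
  uniq L -> (forall G, G \in L -> inB g G) ->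
  \sum_(G <- L) e2 G <= 2 * fib g.+1.
Proof.
move=> L_uniq L_B.
apply: leq_trans (sum_e2_le_size_gen_pairs L_B) _.
apply: leq_trans (size_gen_pairs_le L_uniq L_B) _.
rewrite size_split_words; apply: leq_trans (mirror_fib_conv_le _) _.
by case: g {L_B}.
Qed.
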